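(* Let $(X,d)$ be a metric space with $|X|\geqslant 3$ and let $T\colon X\to X$ be a generalized Ćirić–Reich–Rus type mapping, i.e. there exist $\alpha,\lambda\geqslant 0$ with $2\alpha+\frac{3\lambda}{2}<1$ such that $$d(Tx,Ty)+d(Ty,Tz)+d(Tx,Tz)\leqslant \alpha\big(d(x,y)+d(y,z)+d(z,x)\big)+\lambda\big(d(x,Tx)+d(y,Ty)+d(z,Tz)\big)$$ for all pairwise distinct $x,y,z\in X$. Then $T$ is continuous at each of its fixed points. *)

From Stdlib Require Import Reals.
Open Scope R_scope.

Definition is_metric {X : Type} (d : X -> X -> R) : Prop :=
  (forall x y, 0 <= d x y) /\
  (forall x y, d x y = 0 <-> x = y) /\
  (forall x y, d x y = d y x) /\
  (forall x y z, d x z <= d x y + d y z).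

Definition at_least_three_points (X : Type) : Prop :=
  exists x y z : X, x <> y /\ y <> z /\ x <> z.

Definition gen_CRR_mapping {X : Type} (d : X -> X -> R) (T : X -> X) : Prop :=
  exists alpha lambda : R,
    0 <= alpha /\ 0 <= lambda /\ 2 * alpha + 3 * lambda / 2 < 1 /\
    forall x y z : X, x <> y -> y <> z -> x <> z ->
      d (T x) (T y) + d (T y) (T z) + d (T x) (T z)
      <= alpha * (d x y + d y z + d z x)
         + lambda * (d x (T x) + d y (T y) + d z (T z)).

Definition metric_continuous_at {X : Type} (d : X -> X -> R) (T : X -> X) (x0 : X) : Prop :=
  forall eps : R, 0 < eps -> exists delta : R, 0 < delta /\
    forall x : X, d x x0 < delta -> d (T x) (T x0) < eps.

(* Let x0 = T x0. For any two further points x, z, the three-point inequality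
   at (x, x0, z), together with d(x, Tx) <= d(x, x0) + d(Tx, x0) and
   d(z, Tz) <= d(z, x0) + d(x0, Tz), gives
   (1 - lambda) (d(Tx, x0) + d(x0, Tz)) <= (2 alpha + lambda) (d(x, x0) + d(z, x0)),
   hence d(Tx, x0) <= 2 (d(x, x0) + d(z, x0)) because 2 alpha + 3 lambda <= 2.
   If x0 is not isolated, choosing z close to x0 and only admitting x closer to
   x0 than z makes the right-hand side small; if x0 is isolated there is nothing
   to prove. *)

From Stdlib Require Import Reals Lra Classical.
Open Scope R_scope.

Section Metric.

Variables (X : Type) (d : X -> X -> R).
Hypothesis d_metric : is_metric d.

Lemma dist_ge0 (x y : X) : 0 <= d x y.
Proof. apply d_metric. Qed.

Lemma dist_sym (x y : X) : d x y = d y x.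
Proof. apply d_metric. Qed.

Lemma dist_triangle (x y z : X) : d x z <= d x y + d y z.
Proof. apply d_metric. Qed.

Lemma dist_self (x : X) : d x x = 0.
Proof. apply d_metric; reflexivity. Qed.

Lemma dist_gt0 (x y : X) : x <> y -> 0 < d x y.
Proof.
  intros Hxy; destruct (dist_ge0 x y) as [Hlt | Heq]; [exact Hlt |].
  exfalso; apply Hxy, d_metric; auto.
Qed.

Lemma continuous_at_fixed_point_of_bound (T : X -> X) (x0 : X) (C : R) :
  0 <= C -> T x0 = x0 ->
  (forall x z, x <> x0 -> z <> x0 -> x <> z ->
     d (T x) x0 <= C * (d x x0 + d z x0)) ->
  metric_continuous_at d T x0.
Proof.
  intros HC Hfix Hbound eps Heps.
  set (rho := eps / (2 * (C + 1))).
  assert (Hrho : 0 < rho) by (unfold rho; apply Rdiv_lt_0_compat; lra).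
  assert (HCrho : 2 * C * rho < eps).
  { unfold rho; apply (Rmult_lt_reg_r (2 * (C + 1))); [lra |].
    field_simplify; [nra | lra]. }
  destruct (classic (exists z, z <> x0 /\ d z x0 < rho)) as [[z [Hz Hzr]] | Hisolated].
  - exists (d z x0); split; [now apply dist_gt0 |].
    intros x Hx.
    destruct (classic (x = x0)) as [-> | Hxx0].
    { rewrite Hfix, dist_self; exact Heps. }
    assert (Hxz : x <> z) by (intros ->; lra).
    pose proof (Hbound x z Hxx0 Hz Hxz) as Hb.
    assert (C * (d x x0 + d z x0) <= 2 * C * rho).
    { replace (2 * C * rho) with (C * (rho + rho)) by ring.
      apply Rmult_le_compat_l; lra. }
    rewrite Hfix; lra.
  - exists rho; split; [exact Hrho |].
    intros x Hx.
    destruct (classic (x = x0)) as [-> | Hxx0].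
    + rewrite Hfix, dist_self; exact Heps.
    + exfalso; apply Hisolated; exists x; auto.
Qed.

Section GeneralizedCiricReichRus.

Variables (T : X -> X) (alpha lambda : R).
Hypotheses (alpha_ge0 : 0 <= alpha) (lambda_ge0 : 0 <= lambda)
  (alpha_lambda_lt1 : 2 * alpha + 3 * lambda / 2 < 1).
Hypothesis T_CRR : forall x y z : X, x <> y -> y <> z -> x <> z ->
  d (T x) (T y) + d (T y) (T z) + d (T x) (T z)
  <= alpha * (d x y + d y z + d z x)
     + lambda * (d x (T x) + d y (T y) + d z (T z)).

Lemma CRR_fixed_point_sum_bound (x0 x z : X) :
  T x0 = x0 -> x <> x0 -> z <> x0 -> x <> z ->
  (1 - lambda) * (d (T x) x0 + d x0 (T z))
  <= (2 * alpha + lambda) * (d x x0 + d z x0).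
Proof.
  intros Hfix Hx Hz Hxz.
  pose proof (T_CRR x x0 z Hx (not_eq_sym Hz) Hxz) as H.
  rewrite Hfix, dist_self, (dist_sym (T x) x0), (dist_sym x0 z) in H.
  assert (Hzx : d z x <= d x x0 + d z x0).
  { rewrite (dist_sym x x0); pose proof (dist_triangle z x0 x); lra. }
  assert (Hx_Tx : d x (T x) <= d x x0 + d x0 (T x)) by apply dist_triangle.
  assert (Hz_Tz : d z (T z) <= d z x0 + d x0 (T z)) by apply dist_triangle.
  assert (alpha * (d x x0 + d z x0 + d z x) <= alpha * (2 * (d x x0 + d z x0)))
    by (apply Rmult_le_compat_l; lra).
  assert (lambda * (d x (T x) + 0 + d z (T z))
          <= lambda * (d x x0 + d z x0 + (d x0 (T x) + d x0 (T z))))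
    by (apply Rmult_le_compat_l; lra).
  pose proof (dist_ge0 (T x) (T z)).
  rewrite (dist_sym (T x) x0); lra.
Qed.

Lemma CRR_fixed_point_bound (x0 x z : X) :
  T x0 = x0 -> x <> x0 -> z <> x0 -> x <> z ->
  d (T x) x0 <= 2 * (d x x0 + d z x0).
Proof.
  intros Hfix Hx Hz Hxz.
  pose proof (CRR_fixed_point_sum_bound x0 x z Hfix Hx Hz Hxz) as Hsum.
  pose proof (dist_ge0 x x0); pose proof (dist_ge0 z x0).
  pose proof (dist_ge0 (T x) x0); pose proof (dist_ge0 x0 (T z)).
  assert (Hslack : (2 * alpha + lambda) * (d x x0 + d z x0)
                   <= (1 - lambda) * (2 * (d x x0 + d z x0)))
    by (rewrite <- Rmult_assoc; apply Rmult_le_compat_r; lra).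
  apply Rle_trans with (d (T x) x0 + d x0 (T z)); [lra |].
  apply (Rmult_le_reg_l (1 - lambda)); lra.
Qed.

End GeneralizedCiricReichRus.

End Metric.

Theorem proposition3p4 (X : Type) (d : X -> X -> R) (T : X -> X) :
  is_metric d -> at_least_three_points X -> gen_CRR_mapping d T ->
  forall x0 : X, T x0 = x0 -> metric_continuous_at d T x0.
Proof.
  intros Hd _ [alpha [lambda [Ha [Hl [Hal HT]]]]] x0 Hfix.
  apply (continuous_at_fixed_point_of_bound X d Hd T x0 2); [lra | exact Hfix |].
  intros x z Hx Hz Hxz.
  exact (CRR_fixed_point_bound X d Hd T alpha lambda Ha Hl Hal HT x0 x z Hfix Hx Hz Hxz).
Qed.
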